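(* Let $3\le d\le 50$, let $(\alpha,\beta)\in\mathcal{A}_d$, let $\ell>1000$ be a prime, and let $(y_1,y_2)$ be integers satisfying \[ 4\beta y_2^\ell-\alpha^2 y_1^{2\ell}=d^2-1, \] with $|y_1|\ge 2$, $y_2\ge 2$ and $y_2\ne y_1^2$. Let $A_2=\max\{y_1^2,y_2\}$. Then \[ 1\le \frac{\log A_2}{\log y_1^2}\le 1.03 . \]
   Context: For a prime $q$ let $\mu_q=\operatorname{ord}_q(d^2-1)$ and $\nu_q=\operatorname{ord}_q(d)$. To each prime $q$ associate a finite set $T_q\subset\mathbb{Z}^2$: if $q\nmid d(d^2-1)$, $T_q=\{(0,0)\}$. For $q=2$: $T_2=\{(0,1-\nu_2)\}$ if $2\mid d$; $T_2=\{(1,0),(\mu_2/2,1-\mu_2/2),(3-\mu_2,\mu_2-2)\}$ if $2\nmid d$ and $\mu_2$ is even; $T_2=\{(1,0),(3-\mu_2,\mu_2-2)\}$ if $2\nmid d$ and $\mu_2$ is odd. For odd $q\mid d$: $T_q=\{(-\nu_q,0),(0,-\nu_q)\}$. For odd $q\mid d^2-1$: $T_q=\{(0,0),(-\mu_q,\mu_q),(\mu_q/2,-\mu_q/2)\}$ if $\mu_q$ is even, and $T_q=\{(0,0),(-\mu_q,\mu_q)\}$ if $\mu_q$ is odd. Then $\mathcal{A}_d$ is the set of pairs of positive rationals $(\alpha,\beta)$ with $(\operatorname{ord}_q(\alpha),\operatorname{ord}_q(\beta))\in T_q$ for every prime $q$. *)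

From HB Require Import structures.
From mathcomp Require Import all_boot all_order all_algebra.
From mathcomp Require Import all_classical all_reals all_analysis.
Set Implicit Arguments. Unset Strict Implicit. Unset Printing Implicit Defensive.
Import Order.TTheory GRing.Theory Num.Theory.
Local Open Scope ring_scope.

Definition ordq (q : nat) (x : rat) : int :=
  (logn q `|numq x|%N)%:Z - (logn q `|denq x|%N)%:Z.

Definition mu (d q : nat) : nat := logn q (d ^ 2 - 1)%N.
Definition nu (d q : nat) : nat := logn q d.

Definition inT (d q : nat) (a b : int) : bool :=
  let m := (mu d q)%:Z in
  let n := (nu d q)%:Z in
  if ~~ (q %| d * (d ^ 2 - 1))%N then (a == 0) && (b == 0)
  else if q == 2%N then
    if (2 %| d)%N then (a == 0) && (b == 1 - n)
    else if ~~ odd (mu d q) then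
      [|| (a == 1) && (b == 0),
          (a == ((mu d q)./2)%:Z) && (b == 1 - ((mu d q)./2)%:Z)
        | (a == 3 - m) && (b == m - 2)]
    else ((a == 1) && (b == 0)) || ((a == 3 - m) && (b == m - 2))
  else if (q %| d)%N then
    ((a == - n) && (b == 0)) || ((a == 0) && (b == - n))
  else
    if ~~ odd (mu d q) then
      [|| (a == 0) && (b == 0),
          (a == - m) && (b == m)
        | (a == ((mu d q)./2)%:Z) && (b == - ((mu d q)./2)%:Z)]
    else ((a == 0) && (b == 0)) || ((a == - m) && (b == m)).

Definition in_Ad (d : nat) (alpha beta : rat) : Prop :=
  0 < alpha /\ 0 < beta /\
  forall q : nat, prime q -> inT d q (ordq q alpha) (ordq q beta).

From HB Require Import structures.
From mathcomp Require Import all_boot all_order all_algebra.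
From mathcomp Require Import all_classical all_reals all_analysis.
From mathcomp Require Import zify lra.
Import Order.TTheory GRing.Theory Num.Theory.
Set Implicit Arguments. Unset Strict Implicit. Unset Printing Implicit Defensive.
Local Open Scope ring_scope.

(* Prime by prime, the sets T_q bound ord_q(alpha) by ord_q(2(d^2-1)) and
   -ord_q(beta) by ord_q(d(d^2-1)); hence alpha <= 2E and beta >= 1/(dE), where
   E = d^2-1.  Then 4 beta y2^l = E + alpha^2 y1^(2l) <= E(1+4E) y1^(2l) gives
   y2^l <= d^7 (y1^2)^l, so log y2 / log y1^2 <= 1 + 7 log d / (l log y1^2),
   and d <= 2^6, y1^2 >= 4, l >= 1001 make the last term at most 21/1001. *)

Lemma dvdn_of_logn_le (m n : nat) : (0 < m)%N -> (0 < n)%N ->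
  (forall p, prime p -> logn p m <= logn p n)%N -> (m %| n)%N.
Proof.
move=> m_gt0 n_gt0 le_logn; apply/dvdn_partP => // p.
by rewrite mem_primes => /and3P[p_pr _ _]; rewrite p_part pfactor_dvdn // le_logn.
Qed.

Lemma logn_coprime_eq0 (q m n : nat) : prime q -> coprime m n ->
  logn q m = 0%N \/ logn q n = 0%N.
Proof.
move=> q_pr co_mn; have [q_dvd_m|q_ndvd_m] := boolP (q %| m)%N.
  by right; apply: logn_coprime; exact: coprime_dvdl q_dvd_m co_mn.
by left; apply: logn_coprime; rewrite prime_coprime.
Qed.

Lemma numq_dvdn (x : rat) (N : nat) : x != 0 -> (0 < N)%N ->
  (forall q, prime q -> ordq q x <= (logn q N)%:Z) -> (`|numq x| %| N)%N.
Proof.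
move=> x_neq0 N_gt0 le_ordq; apply: dvdn_of_logn_le => //; first by rewrite absz_gt0 numq_eq0.
move=> q q_pr; have := le_ordq q q_pr; rewrite /ordq.
by case: (logn_coprime_eq0 q_pr (coprime_num_den x)) => ->; lia.
Qed.

Lemma denq_dvdn (x : rat) (N : nat) : (0 < N)%N ->
  (forall q, prime q -> - ordq q x <= (logn q N)%:Z) -> (`|denq x| %| N)%N.
Proof.
move=> N_gt0 le_ordq; apply: dvdn_of_logn_le => //; first by rewrite absz_gt0 denq_eq0.
move=> q q_pr; have := le_ordq q q_pr; rewrite /ordq.
by case: (logn_coprime_eq0 q_pr (coprime_num_den x)) => ->; lia.
Qed.

Lemma inT_le (d q : nat) (a b : int) : (1 < d)%N -> prime q -> inT d q a b ->
  a <= (logn q (2 * (d ^ 2 - 1)))%:Z /\ - b <= (logn q (d * (d ^ 2 - 1)))%:Z.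
Proof.
move=> d_gt1 q_pr; have d2_gt1 : (0 < d ^ 2 - 1)%N by nia.
rewrite !lognM ?muln_gt0 ?d2_gt1 ?(ltnW d_gt1) // logn_prime // /inT -/(mu d q) -/(nu d q) /=.
have half_le : ((mu d q)./2 <= mu d q)%N by lia.
case: ifP => [_|/negbFE q_dvd]; first lia.
case: eqP => [q2|_]; last by repeat case: ifP; lia.
move: q_dvd; rewrite q2 Euclid_dvdM // => /orP[d_even|d2_even]; first by rewrite d_even; lia.
have mu_gt0 : (0 < mu d 2)%N by rewrite logn_gt0 mem_primes d2_gt1 d2_even.
by repeat case: ifP; lia.
Qed.

Lemma ler_numq (x : rat) : 0 <= x -> x <= (numq x)%:~R.
Proof.
move=> x_ge0; rewrite numqE ler_peMr // (ler_int rat 1).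
by have := denq_gt0 x; lia.
Qed.

Lemma mulr_denq_ge1 (x : rat) : 0 < x -> 1 <= x * (denq x)%:~R.
Proof. by rewrite -numqE -numq_gt0 (ler_int rat 1). Qed.

Lemma in_Ad_bounds (d : nat) (alpha beta : rat) : (1 < d)%N -> in_Ad d alpha beta ->
  alpha <= (2 * (d ^ 2 - 1))%N%:R /\ 1 <= beta * (d * (d ^ 2 - 1))%N%:R.
Proof.
move=> d_gt1 [alpha_gt0 [beta_gt0 inT_ord]].
have N_gt0 : (0 < d ^ 2 - 1)%N by nia.
have inT_le_ord q (q_pr : prime q) := inT_le d_gt1 q_pr (inT_ord q q_pr).
have num_le : (`|numq alpha| <= 2 * (d ^ 2 - 1))%N.
  apply/dvdn_leq/numq_dvdn; rewrite ?gt_eqF ?muln_gt0 ?N_gt0 //.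
  by move=> q /inT_le_ord[].
have den_le : (`|denq beta| <= d * (d ^ 2 - 1))%N.
  apply/dvdn_leq/denq_dvdn; rewrite ?muln_gt0 ?N_gt0 ?(ltnW d_gt1) //.
  by move=> q /inT_le_ord[].
split.
  apply: (le_trans (ler_numq (ltW alpha_gt0))).
  by rewrite pmulrn ler_int; lia.
apply: (le_trans (mulr_denq_ge1 beta_gt0)); rewrite ler_pM2l //.
by rewrite pmulrn ler_int; have := denq_gt0 beta; lia.
Qed.

Lemma ler_pow7_of_eq (F : realFieldType) (D a b P Q : F) :
  1 <= D -> 0 <= a <= 2 * (D ^+ 2 - 1) -> 1 <= b * (D * (D ^+ 2 - 1)) -> 1 <= P ->
  4 * b * Q - a ^+ 2 * P = D ^+ 2 - 1 -> Q <= D ^+ 7 * P.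
Proof.
move=> D_ge1 /andP[a_ge0 a_le] b_ge P_ge1.
have D6 : D ^+ 6 = (D ^+ 2 - 1 + 1) ^+ 3 by rewrite subrK -exprM.
rewrite [D ^+ 7]exprS D6; set E := D ^+ 2 - 1 in a_le b_ge * => eqE.
have E_ge0 : 0 <= E by rewrite subr_ge0 exprn_ege1.
have DE_ge0 : 0 <= D * E by rewrite mulr_ge0 // (le_trans ler01).
have b_gt0 : 0 < b.
  by rewrite ltNge; apply/negP => b_le0; have := mulr_le0_ge0 b_le0 DE_ge0; lra.
have a2_le : a ^+ 2 <= 4 * E ^+ 2 by nra.
have bQ_le : 4 * b * Q <= E * (1 + 4 * E) * P.
  have := ler_wpM2l E_ge0 P_ge1; have := ler_wpM2r (le_trans ler01 P_ge1) a2_le; lra.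
have Q_ge0 : 0 <= Q by nra.
have Q_le : Q <= b * (D * E) * Q by rewrite ler_peMl.
have := ler_wpM2l DE_ge0 bQ_le.
have DP_ge0 : 0 <= D * P by rewrite mulr_ge0 // (le_trans ler01).
have : D * P * (E * E * (1 + 4 * E)) <= D * P * (4 * (E + 1) ^+ 3).
  by rewrite ler_wpM2l //; nra.
lra.
Qed.

Lemma expr_le_of_in_Ad (d : nat) (alpha beta : rat) (l : nat) (y1 y2 : int) :
  (1 < d)%N -> in_Ad d alpha beta -> y1 != 0 ->
  4 * beta * (y2%:~R) ^+ l - alpha ^+ 2 * (y1%:~R) ^+ (2 * l) = (d ^ 2 - 1)%N%:R ->
  y2 ^+ l <= (d ^ 7)%:Z * (y1 ^+ 2) ^+ l.
Proof.
move=> d_gt1 Ad y1_neq0 eqd.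
have [alpha_le beta_ge] := in_Ad_bounds d_gt1 Ad.
have sqr_sub1 : (d ^ 2 - 1)%N%:R = d%:R ^+ 2 - 1 :> rat by rewrite natrB ?natrX //; nia.
rewrite -(ler_int rat) intrM !rmorphXn /= -exprM -pmulrn natrX.
apply: (ler_pow7_of_eq (a := alpha) (b := beta)).
- by rewrite (ler_nat _ 1); lia.
- by rewrite (ltW (proj1 Ad)) -sqr_sub1 -natrM.
- by rewrite -sqr_sub1 -natrM.
- by rewrite exprM exprn_ege1 // -rmorphXn (ler_int _ 1); nia.
- by rewrite -sqr_sub1.
Qed.

Lemma ln_ratio_le (R : realType) (c e x y : R) (n : nat) :
  (0 < n)%N -> 0 < c -> 1 < x -> 0 < y ->
  y ^+ n <= c * x ^+ n -> ln c <= e * n%:R * ln x -> ln y / ln x <= 1 + e.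
Proof.
move=> n_gt0 c_gt0 x_gt1 y_gt0 le_pow le_lnc.
have x_gt0 : 0 < x := lt_trans ltr01 x_gt1.
have lnx_gt0 : 0 < ln x by rewrite ln_gt0.
have : ln (y ^+ n) <= ln (c * x ^+ n) by rewrite ler_ln ?posrE ?mulr_gt0 ?exprn_gt0.
rewrite lnM ?posrE ?exprn_gt0 // !lnXn // -[ln y *+ n]mulr_natr -[ln x *+ n]mulr_natr => le_ln.
rewrite ler_pdivrMr // -(ler_pM2r (_ : 0 < n%:R)) ?ltr0n //.
lra.
Qed.

Lemma ln_natr_pow7_le (R : realType) (d n : nat) (x : R) :
  (0 < d <= 64)%N -> 4 <= x -> (1001 <= n)%N -> ln ((d ^ 7)%:R : R) <= 3 / 100 * n%:R * ln x.
Proof.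
move=> /andP[d_gt0 d_le64] x_ge4 n_ge1001.
have ln2_gt0 : 0 < ln (2 : R) by rewrite ln_gt0 // ltr1n.
have lnd_le : ln (d%:R : R) <= ln 2 * 6.
  by rewrite mulr_natr -lnXn // ler_ln ?posrE -?natrX ?ler_nat ?ltr0n.
have lnx_ge : ln 2 * 2 <= ln x by rewrite mulr_natr -lnXn // ler_ln ?posrE; lra.
have n_ge : 1001 <= n%:R :> R by rewrite (ler_nat _ 1001).
have := ler_pM (ler0n _ _) (ltW (mulr_gt0 ln2_gt0 (ltr0Sn _ 1))) n_ge lnx_ge.
rewrite natrX lnXn ?ltr0n // -mulr_natr.
lra.
Qed.

Theorem lemma5p3 (R : realType) (d : nat) (alpha beta : rat) (l : nat)
    (y1 y2 : int) :
  (3 <= d <= 50)%N ->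
  in_Ad d alpha beta ->
  prime l -> (1000 < l)%N ->
  4 * beta * (y2%:~R) ^+ l - alpha ^+ 2 * (y1%:~R) ^+ (2 * l) = (d ^ 2 - 1)%N%:R ->
  2 <= `|y1| -> 2 <= y2 -> y2 != y1 ^+ 2 ->
  let A2 : int := Num.max (y1 ^+ 2) y2 in
  1 <= ln (A2%:~R : R) / ln ((y1 ^+ 2)%:~R : R) <= 103 / 100.
Proof.
move=> /andP[d_ge3 d_le50] Ad _ l_gt1000 eqd y1_ge2 y2_ge2 _ /=.
have y1_neq0 : y1 != 0 by lia.
have le_pow := expr_le_of_in_Ad (ltnW d_ge3) Ad y1_neq0 eqd.
have Y1_ge4 : 4 <= (y1 ^+ 2)%:~R :> R by rewrite (ler_int R 4); nia.
have Y1_gt1 : 1 < (y1 ^+ 2)%:~R :> R by lra.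
have Y2_gt0 : 0 < y2%:~R :> R by rewrite ltr0z; lia.
have lnY1_gt0 : 0 < ln ((y1 ^+ 2)%:~R : R) by rewrite ln_gt0.
case: (leP (y1 ^+ 2) y2) => [le_y1_y2|_]; last by rewrite divff ?gt_eqF // lexx /=; lra.
apply/andP; split.
  by rewrite ler_pdivlMr // mul1r ler_ln ?posrE ?ler_int // (lt_trans ltr01).
apply: le_trans (ln_ratio_le (c := (d ^ 7)%:R) (e := 3 / 100) (n := l) _ _ Y1_gt1 Y2_gt0 _ _) _.
- lia.
- by rewrite ltr0n expn_gt0; lia.
- by move: le_pow; rewrite -(ler_int R) intrM !rmorphXn -pmulrn.
- by apply: ln_natr_pow7_le => //; lia.
- lra.
Qed.
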